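(* Let $I=(0,1)$, $\nu>0$, $\gamma>1$, $\rho_0\in C(\bar I)$ with $\rho_0>0$ in $I$, $\rho_0=0$ on $\partial I$, and $v_0=u_0$ continuous on $\bar I$. Suppose that there exist positive $\lambda_1,\lambda_2,\lambda_3,\lambda_4$ with $0<\lambda_3,\lambda_4<1$ such that either ($\frac{(\rho_0)_x}{\rho_0}\ge\lambda_1$ in $(0,\lambda_3)$, $v_0(\lambda_3)<0$, $v_0\le0$ in $(0,\lambda_3)$) or ($\frac{(\rho_0)_x}{\rho_0}\le-\lambda_2$ in $(\lambda_4,1)$, $v_0(\lambda_4)>0$, $v_0\ge0$ in $(\lambda_4,1)$). Then for every $T>0$ the problem $$\rho_0 v_t+\Big(\frac{\rho_0^\gamma}{\eta_x^\gamma}\Big)_x=\nu\Big(\frac{v_x}{\eta_x}\Big)_x\ \text{ in } I\times(0,T],\qquad \eta_t=v,$$ $$(v,\eta)=(u_0,x)\text{ on }I\times\{t=0\},\qquad v=v_x=0\text{ on }\partial I\times(0,T],$$ has no solution $(v,\eta)$ in $C^{2,1}(\bar I\times[0,T])$.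
   Context: $C^{2,1}(\bar I\times[0,T])$ denotes functions that are $C^2$ in $x$ and $C^1$ in $t$ on $\bar I\times[0,T]$. *)

From Stdlib Require Import Reals Lra.
Open Scope R_scope.

Definition deriv_within (g : R -> R) (a b x l : R) : Prop :=
  forall eps, 0 < eps -> exists delta, 0 < delta /\
    forall h, h <> 0 -> Rabs h < delta -> a <= x + h <= b ->
      Rabs ((g (x + h) - g x) / h - l) < eps.

Definition cont_on_interval (g : R -> R) (a b : R) : Prop :=
  forall x, a <= x <= b -> forall eps, 0 < eps -> exists delta, 0 < delta /\
    forall y, a <= y <= b -> Rabs (y - x) < delta -> Rabs (g y - g x) < eps.

Definition in_rect (T x t : R) : Prop := 0 <= x <= 1 /\ 0 <= t <= T.

Definition cont_rect (f : R -> R -> R) (T : R) : Prop :=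
  forall x t, in_rect T x t -> forall eps, 0 < eps -> exists delta, 0 < delta /\
    forall y s, in_rect T y s -> Rabs (y - x) < delta -> Rabs (s - t) < delta ->
      Rabs (f y s - f x t) < eps.

Definition C21_with (f fx fxx ft : R -> R -> R) (T : R) : Prop :=
  (forall x t, in_rect T x t -> deriv_within (fun y => f y t) 0 1 x (fx x t)) /\
  (forall x t, in_rect T x t -> deriv_within (fun y => fx y t) 0 1 x (fxx x t)) /\
  (forall x t, in_rect T x t -> deriv_within (fun s => f x s) 0 T t (ft x t)) /\
  cont_rect f T /\ cont_rect fx T /\ cont_rect fxx T /\ cont_rect ft T.

(* (v, eta) in C^{2,1} solves the problem on [0,T]; the partial derivatives
   are given explicitly (they are uniquely determined by v, eta). *)
Definition is_solution (nu gamma : R) (rho0 u0 : R -> R) (T : R)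
  (v eta : R -> R -> R) : Prop :=
  exists vx vxx vt ex exx et : R -> R -> R,
    C21_with v vx vxx vt T /\ C21_with eta ex exx et T /\
    (* eta_x > 0 where the equation is posed, so that eta_x^gamma is defined *)
    (forall x t, 0 < x < 1 -> 0 < t <= T -> 0 < ex x t) /\
    (forall x t, 0 < x < 1 -> 0 < t <= T ->
       exists P Q,
         derivable_pt_lim (fun y => Rpower (rho0 y) gamma / Rpower (ex y t) gamma) x P /\
         derivable_pt_lim (fun y => vx y t / ex y t) x Q /\
         rho0 x * vt x t + P = nu * Q) /\
    (forall x t, 0 < x < 1 -> 0 < t <= T -> et x t = v x t) /\
    (forall x, 0 < x < 1 -> v x 0 = u0 x /\ eta x 0 = x) /\
    (forall t, 0 < t <= T ->
       v 0 t = 0 /\ vx 0 t = 0 /\ v 1 t = 0 /\ vx 1 t = 0).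

From Stdlib Require Import Reals Lra ClassicalEpsilon Classical.
From Coquelicot Require Import Coquelicot.
Open Scope R_scope.

(* By the symmetry x -> 1 - x it suffices to treat the first alternative; put
   L := lambda_3.  For a short time t0, eta_x stays in (1/2, 3/2), eta_xx
   stays small and v(L, .) stays below u0(L)/2.  With c := 2L/t0 and eps
   small, z := v + eps (x^2 - L x + c t x) is nonpositive on [0,L] x [0,t0]:
   on the parabolic boundary because v(0,.) = 0, v(L,.) < 0 and u0 <= 0, and
   at an interior maximum the equation would bound the pressure term, which
   rho0_x / rho0 >= lambda_1 makes at least K rho0^gamma, by
   -eps nu + eps c L rho0, impossible for small eps as gamma > 1.  Yet
   z(x, t0) = v(x, t0) + eps (x^2 + L x) with v = v_x = 0 at x = 0, so
   z(., t0) is positive just right of 0. *)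

(** * One-variable derivatives and extrema *)

Lemma deriv_within_interior g a b x l :
  deriv_within g a b x l -> a < x < b -> derivable_pt_lim g x l.
Proof.
  intros Hd Hx eps Heps.
  destruct (Hd eps Heps) as [d [Hd0 Hdiff]].
  assert (Hpos : 0 < Rmin d (Rmin (x - a) (b - x))) by (repeat apply Rmin_pos; lra).
  exists (mkposreal _ Hpos); simpl; intros h Hh Hhd.
  pose proof (Rmin_l d (Rmin (x - a) (b - x))).
  pose proof (Rmin_r d (Rmin (x - a) (b - x))).
  pose proof (Rmin_l (x - a) (b - x)); pose proof (Rmin_r (x - a) (b - x)).
  apply Rabs_def2 in Hhd as Hh'.
  apply Hdiff; [assumption | lra | lra].
Qed.

Lemma deriv_within_ext f g a b x l l' :
  deriv_within f a b x l -> a <= x <= b ->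
  (forall y, a <= y <= b -> g y = f y) -> l' = l -> deriv_within g a b x l'.
Proof.
  intros Hd Hx Hfg -> eps Heps.
  destruct (Hd eps Heps) as [d [Hd0 Hdiff]].
  exists d; split; [assumption|].
  intros h Hh Hhd Hxh; rewrite !Hfg by assumption; auto.
Qed.

Lemma deriv_within_affine_comb g a b x l (al be ga : R) :
  deriv_within g a b x l ->
  deriv_within (fun y => al * g y + be * y + ga) a b x (al * l + be).
Proof.
  intros Hd eps Heps.
  assert (Hk : 0 < Rabs al + 1) by (pose proof (Rabs_pos al); lra).
  destruct (Hd (eps / (Rabs al + 1))) as [d [Hd0 Hdiff]].
  { apply Rdiv_lt_0_compat; lra. }
  exists d; split; [assumption|].
  intros h Hh Hhd Hxh; specialize (Hdiff h Hh Hhd Hxh).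
  replace ((al * g (x + h) + be * (x + h) + ga - (al * g x + be * x + ga)) / h
           - (al * l + be))
    with (al * ((g (x + h) - g x) / h - l)) by (field; assumption).
  rewrite Rabs_mult.
  apply Rle_lt_trans with ((Rabs al + 1) * Rabs ((g (x + h) - g x) / h - l)).
  - apply Rmult_le_compat_r; [apply Rabs_pos | lra].
  - apply Rmult_lt_reg_l with (/ (Rabs al + 1)); [apply Rinv_0_lt_compat; lra|].
    rewrite <- Rmult_assoc, Rinv_l, Rmult_1_l by lra.
    rewrite Rmult_comm; exact Hdiff.
Qed.

Lemma deriv_within_reflect g x l :
  deriv_within g 0 1 (1 - x) l -> deriv_within (fun y => g (1 - y)) 0 1 x (- l).
Proof.
  intros Hd eps Heps.
  destruct (Hd eps Heps) as [d [Hd0 Hdiff]].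
  exists d; split; [assumption|].
  intros h Hh Hhd Hxh.
  specialize (Hdiff (- h) ltac:(lra) ltac:(rewrite Rabs_Ropp; assumption) ltac:(lra)).
  replace (1 - (x + h)) with (1 - x + - h) by ring.
  replace ((g (1 - x + - h) - g (1 - x)) / h - - l)
    with (- ((g (1 - x + - h) - g (1 - x)) / - h - l)) by (field; assumption).
  rewrite Rabs_Ropp; assumption.
Qed.

Lemma deriv_within_affine_slope g a b x l al be :
  deriv_within g a b x l -> a < x < b ->
  (forall y, a < y < b -> g y = al * y + be) -> l = al.
Proof.
  intros Hd Hx Hg.
  apply cond_eq; intros eps Heps.
  destruct (Hd eps Heps) as [d [Hd0 Hdiff]].
  pose proof (Rmin_l (d / 2) (Rmin ((x - a) / 2) ((b - x) / 2))).
  pose proof (Rmin_r (d / 2) (Rmin ((x - a) / 2) ((b - x) / 2))).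
  pose proof (Rmin_l ((x - a) / 2) ((b - x) / 2)).
  pose proof (Rmin_r ((x - a) / 2) ((b - x) / 2)).
  set (h := Rmin (d / 2) (Rmin ((x - a) / 2) ((b - x) / 2))) in *.
  assert (Hh : 0 < h) by (repeat apply Rmin_pos; lra).
  specialize (Hdiff h ltac:(lra) ltac:(rewrite Rabs_pos_eq; lra) ltac:(lra)).
  rewrite (Hg (x + h)), (Hg x) in Hdiff by lra.
  replace ((al * (x + h) + be - (al * x + be)) / h) with al in Hdiff by (field; lra).
  rewrite Rabs_minus_sym; assumption.
Qed.

Lemma derivable_pt_lim_reflect F x l :
  derivable_pt_lim F (1 - x) l -> derivable_pt_lim (fun y => F (1 - y)) x (- l).
Proof.
  intros Hd eps Heps.
  destruct (Hd eps Heps) as [d Hdiff].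
  exists d; intros h Hh Hhd.
  specialize (Hdiff (- h) ltac:(lra) ltac:(rewrite Rabs_Ropp; assumption)).
  replace (1 - (x + h)) with (1 - x + - h) by ring.
  replace ((F (1 - x + - h) - F (1 - x)) / h - - l)
    with (- ((F (1 - x + - h) - F (1 - x)) / - h - l)) by (field; assumption).
  rewrite Rabs_Ropp; assumption.
Qed.

Lemma derivable_pt_lim_quadratic p q r x :
  derivable_pt_lim (fun y => p * (y * y) + q * y + r) x (2 * p * x + q).
Proof.
  apply is_derive_Reals.
  auto_derive; [exact I | ring].
Qed.

Lemma deriv_within_zero_at_left_end g b k L :
  0 < L <= b -> deriv_within g 0 b 0 0 -> g 0 = 0 -> 0 < k ->
  exists y, 0 < y < L /\ - k * y < g y.
Proof.
  intros HL Hd Hg0 Hk.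
  destruct (Hd k Hk) as [d [Hd0 Hdiff]].
  pose proof (Rmin_l d L); pose proof (Rmin_r d L).
  assert (0 < Rmin d L) by (apply Rmin_pos; lra).
  set (y := Rmin d L / 2) in *.
  exists y; split; [unfold y; lra|].
  specialize (Hdiff y ltac:(unfold y; lra) ltac:(rewrite Rabs_pos_eq; unfold y; lra)
                ltac:(unfold y; lra)).
  rewrite Rplus_0_l, Hg0, !Rminus_0_r in Hdiff.
  apply Rabs_def2 in Hdiff as [_ Hlow].
  apply Rmult_lt_compat_r with (r := y) in Hlow; [|unfold y; lra].
  replace (g y / y * y) with (g y) in Hlow by (field; unfold y; lra).
  lra.
Qed.

Lemma derivative_zero_at_interior_max g a b x l :
  derivable_pt_lim g x l -> a < x < b ->
  (forall y, a < y < b -> g y <= g x) -> l = 0.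
Proof.
  intros Hd Hx Hmax.
  assert (pr : derivable_pt g x) by (exists l; exact Hd).
  rewrite <- (deriv_maximum g a b x pr (proj1 Hx) (proj2 Hx)
                (fun y Hay Hyb => Hmax y (conj Hay Hyb))).
  symmetry; apply derive_pt_eq_0; exact Hd.
Qed.

(* If g'' x > 0, then g' > 0 just right of x, and the mean value theorem
   makes g increase there. *)
Lemma second_derivative_nonpos_at_interior_max g g' a b x l :
  (forall y, a < y < b -> derivable_pt_lim g y (g' y)) -> a < x < b ->
  derivable_pt_lim g' x l -> (forall y, a < y < b -> g y <= g x) -> l <= 0.
Proof.
  intros Hd Hx Hd2 Hmax.
  assert (Hg'x : g' x = 0)
    by (apply (derivative_zero_at_interior_max g a b x); auto).
  destruct (Rle_lt_dec l 0) as [|Hl]; [assumption|exfalso].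
  destruct (Hd2 (l / 2) ltac:(lra)) as [d Hd2'].
  pose proof (cond_pos d).
  pose proof (Rmin_l (d / 2) ((b - x) / 2)); pose proof (Rmin_r (d / 2) ((b - x) / 2)).
  assert (0 < Rmin (d / 2) ((b - x) / 2)) by (apply Rmin_pos; lra).
  set (y := x + Rmin (d / 2) ((b - x) / 2)) in *.
  assert (Hg'pos : forall c, x < c <= y -> 0 < g' c).
  { intros c Hc.
    specialize (Hd2' (c - x) ltac:(lra) ltac:(rewrite Rabs_pos_eq; unfold y in Hc; lra)).
    replace (x + (c - x)) with c in Hd2' by ring.
    rewrite Hg'x, Rminus_0_r in Hd2'.
    apply Rabs_def2 in Hd2' as [_ Hlow].
    assert (Hq : 0 < g' c / (c - x)) by lra.
    replace (g' c) with (g' c / (c - x) * (c - x)) by (field; lra).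
    apply Rmult_lt_0_compat; lra. }
  destruct (MVT_cor2 g g' x y) as [c [Hgc Hc]]; [unfold y; lra| |].
  - intros c Hc; apply Hd; unfold y in Hc; lra.
  - specialize (Hg'pos c ltac:(lra)).
    specialize (Hmax y ltac:(unfold y; lra)).
    assert (0 < g' c * (y - x)) by (apply Rmult_lt_0_compat; lra).
    lra.
Qed.

Lemma time_derivative_nonneg_at_max g T ts l :
  deriv_within g 0 T ts l -> 0 < ts <= T ->
  (forall s, 0 <= s <= ts -> g s <= g ts) -> 0 <= l.
Proof.
  intros Hd Hts Hmax.
  destruct (Rle_lt_dec 0 l) as [|Hl]; [assumption|exfalso].
  destruct (Hd (- l / 2) ltac:(lra)) as [d [Hd0 Hdiff]].
  pose proof (Rmin_l (d / 2) (ts / 2)); pose proof (Rmin_r (d / 2) (ts / 2)).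
  assert (0 < Rmin (d / 2) (ts / 2)) by (apply Rmin_pos; lra).
  set (h := - Rmin (d / 2) (ts / 2)) in *.
  specialize (Hdiff h ltac:(unfold h; lra)
                ltac:(rewrite Rabs_left; unfold h; lra) ltac:(unfold h; lra)).
  apply Rabs_def2 in Hdiff as [Hup _].
  specialize (Hmax (ts + h) ltac:(unfold h; lra)).
  assert (Hq : 0 <= (g (ts + h) - g ts) / h).
  { replace ((g (ts + h) - g ts) / h) with ((g ts - g (ts + h)) / - h)
      by (field; unfold h; lra).
    apply Rmult_le_pos; [lra|].
    left; apply Rinv_0_lt_compat; unfold h; lra. }
  lra.
Qed.

(** * Continuity on the rectangle [0,1] x [0,T] *)

Lemma Rabs_lt_half_sum a b eps :
  Rabs a < eps / 2 -> Rabs b < eps / 2 -> Rabs (a + b) < eps.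
Proof. intros Ha Hb; pose proof (Rabs_triang a b); lra. Qed.

(* Heine's theorem on the rectangle, from Coquelicot's compactness lemma
   applied to a choice of half-moduli of continuity. *)
Lemma cont_rect_uniform f T :
  cont_rect f T -> forall eps, 0 < eps ->
  exists d, 0 < d /\ forall x t y s, in_rect T x t -> in_rect T y s ->
    Rabs (x - y) < d -> Rabs (t - s) < d -> Rabs (f x t - f y s) < eps.
Proof.
  intros Hc eps Heps.
  set (modulus := fun u w (d : posreal) => in_rect T u w -> forall y s, in_rect T y s ->
         Rabs (y - u) < 2 * d -> Rabs (s - w) < 2 * d -> Rabs (f y s - f u w) < eps / 2).
  assert (Hex : forall u w, exists d, modulus u w d).
  { intros u w; destruct (classic (in_rect T u w)) as [Huw|Hout].
    - destruct (Hc u w Huw (eps / 2) ltac:(lra)) as [d [Hd Hcont]].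
      exists (mkposreal (d / 2) ltac:(lra)); intros _ y s Hys Hy Hs; simpl in *.
      apply Hcont; [assumption | lra | lra].
    - exists (mkposreal 1 Rlt_0_1); intros Huw; contradiction. }
  set (dm := fun u w => epsilon (inhabits (mkposreal 1 Rlt_0_1)) (modulus u w)).
  assert (Hdm : forall u w, modulus u w (dm u w)) by (intros; apply epsilon_spec, Hex).
  destruct (compactness_value_2d 0 1 0 T dm) as [d Hd].
  exists d; split; [apply cond_pos|].
  intros x t y s Hxt Hys Hxy Hts.
  apply NNPP; intro Hfar.
  apply (Hd x t (proj1 Hxt) (proj2 Hxt)).
  intros [u [w [Hu [Hw [Hxu [Htw Hdu]]]]]].
  apply Hfar.
  assert (Huw : in_rect T u w) by (split; assumption).
  pose proof (cond_pos (dm u w)).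
  replace (f x t - f y s) with ((f x t - f u w) + - (f y s - f u w)) by ring.
  apply Rabs_lt_half_sum; [|rewrite Rabs_Ropp]; apply (Hdm u w Huw); try assumption.
  - lra.
  - lra.
  - replace (y - u) with ((y - x) + (x - u)) by ring.
    pose proof (Rabs_triang (y - x) (x - u)); rewrite Rabs_minus_sym in Hxy; lra.
  - replace (s - w) with ((s - t) + (t - w)) by ring.
    pose proof (Rabs_triang (s - t) (t - w)); rewrite Rabs_minus_sym in Hts; lra.
Qed.

Lemma cont_rect_of_continuity_2d f T :
  (forall x t, continuity_2d_pt f x t) -> cont_rect f T.
Proof.
  intros Hc x t _ eps Heps.
  destruct (Hc x t (mkposreal eps Heps)) as [d Hd].
  exists d; split; [apply cond_pos|].
  intros y s _; apply Hd.
Qed.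

Lemma cont_rect_plus f g T :
  cont_rect f T -> cont_rect g T -> cont_rect (fun x t => f x t + g x t) T.
Proof.
  intros Hf Hg x t Hxt eps Heps.
  destruct (Hf x t Hxt (eps / 2) ltac:(lra)) as [d1 [Hd1 Hf']].
  destruct (Hg x t Hxt (eps / 2) ltac:(lra)) as [d2 [Hd2 Hg']].
  exists (Rmin d1 d2); split; [apply Rmin_pos; assumption|].
  intros y s Hys Hy Hs.
  pose proof (Rmin_l d1 d2); pose proof (Rmin_r d1 d2).
  replace (f y s + g y s - (f x t + g x t)) with ((f y s - f x t) + (g y s - g x t))
    by ring.
  apply Rabs_lt_half_sum; [apply Hf' | apply Hg']; auto; lra.
Qed.

Definition clamp (a b y : R) : R := Rmax a (Rmin b y).

Lemma clamp_id a b y : a <= y <= b -> clamp a b y = y.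
Proof.
  intros Hy; unfold clamp, Rmax, Rmin.
  destruct (Rle_dec b y); destruct (Rle_dec a _); lra.
Qed.

Lemma clamp_contract a b y c : a <= c <= b ->
  a <= clamp a b y <= b /\ Rabs (clamp a b y - c) <= Rabs (y - c).
Proof.
  intros Hc; unfold clamp, Rmax, Rmin.
  destruct (Rle_dec b y); destruct (Rle_dec a _);
    unfold Rabs; repeat destruct Rcase_abs; split; lra.
Qed.

(* The extreme value theorem for relative continuity: extend g to R by
   clamping the argument into [a,b]. *)
Lemma cont_on_interval_attains_max g a b :
  a <= b -> cont_on_interval g a b ->
  exists xm, a <= xm <= b /\ forall y, a <= y <= b -> g y <= g xm.
Proof.
  intros Hab Hc.
  destruct (continuity_ab_maj (fun y => g (clamp a b y)) a b Hab) as [M [HM HMab]].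
  - intros c Hcab eps Heps.
    destruct (Hc c Hcab eps Heps) as [d [Hd Hcont]].
    exists d; split; [assumption|].
    intros y [_ Hy]; simpl in *; unfold R_dist in *.
    rewrite (clamp_id a b c Hcab).
    destruct (clamp_contract a b y c Hcab) as [Hin Hle].
    apply Hcont; [assumption | lra].
  - exists M; split; [assumption|].
    intros y Hy; specialize (HM y Hy); rewrite !clamp_id in HM; assumption.
Qed.

(* Maximize first in x, then maximize the (uniformly continuous) partial
   maximum in t. *)
Lemma cont_rect_attains_max f T L t0 :
  cont_rect f T -> 0 <= L <= 1 -> 0 <= t0 <= T ->
  exists xs ts, 0 <= xs <= L /\ 0 <= ts <= t0 /\
    forall x t, 0 <= x <= L -> 0 <= t <= t0 -> f x t <= f xs ts.
Proof.
  intros Hc HL Ht0.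
  set (is_max_at := fun t m => (forall x, 0 <= x <= L -> f x t <= m) /\
                               exists x, 0 <= x <= L /\ f x t = m).
  set (phi := fun t => epsilon (inhabits 0) (is_max_at t)).
  assert (Hphi : forall t, 0 <= t <= t0 -> is_max_at t (phi t)).
  { intros t Ht; apply epsilon_spec.
    destruct (cont_on_interval_attains_max (fun x => f x t) 0 L (proj1 HL))
      as [xm [Hxm Hm]].
    - intros x Hx eps Heps.
      destruct (Hc x t ltac:(split; lra) eps Heps) as [d [Hd Hcont]].
      exists d; split; [assumption|].
      intros y Hy Hyx; apply Hcont; [split; lra | assumption |].
      rewrite Rminus_diag, Rabs_R0; assumption.
    - exists (f xm t); split; [assumption|]; exists xm; split; auto. }
  destruct (cont_on_interval_attains_max phi 0 t0 (proj1 Ht0)) as [ts [Hts Hmax]].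
  - intros t Ht eps Heps.
    destruct (cont_rect_uniform f T Hc (eps / 2) ltac:(lra)) as [d [Hd Hunif]].
    exists d; split; [assumption|].
    intros s Hs Hst.
    destruct (Hphi t Ht) as [Hbt [x1 [Hx1 Ht1]]]; rewrite <- Ht1 in Hbt |- *.
    destruct (Hphi s Hs) as [Hbs [x2 [Hx2 Hs2]]]; rewrite <- Hs2 in Hbs |- *.
    specialize (Hbt x2 Hx2); specialize (Hbs x1 Hx1).
    assert (H2 : Rabs (f x2 s - f x2 t) < eps / 2).
    { apply Hunif; try (split; lra); [rewrite Rminus_diag, Rabs_R0 | ]; lra. }
    assert (H1 : Rabs (f x1 s - f x1 t) < eps / 2).
    { apply Hunif; try (split; lra); [rewrite Rminus_diag, Rabs_R0 | ]; lra. }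
    apply Rabs_def2 in H1; apply Rabs_def2 in H2.
    apply Rabs_def1; lra.
  - destruct (Hphi ts Hts) as [_ [xs [Hxs Hfxs]]].
    exists xs, ts; split; [assumption|split; [assumption|]].
    intros x t Hx Ht.
    destruct (Hphi t Ht) as [Hbt _].
    specialize (Hbt x Hx); specialize (Hmax t Ht); lra.
Qed.

Lemma cont_rect_near_initial_time f T :
  cont_rect f T -> forall eps, 0 < eps ->
  exists d, 0 < d /\ forall x t, in_rect T x t -> t < d -> Rabs (f x t - f x 0) < eps.
Proof.
  intros Hc eps Heps.
  destruct (cont_rect_uniform f T Hc eps Heps) as [d [Hd Hunif]].
  exists d; split; [assumption|].
  intros x t [Hx Ht] Htd.
  apply Hunif; [split; lra | split; lra | rewrite Rminus_diag, Rabs_R0 |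
    rewrite Rminus_0_r, Rabs_pos_eq]; lra.
Qed.

Lemma cont_rect_initial_zero f T x :
  cont_rect f T -> 0 < T -> 0 <= x <= 1 ->
  (forall t, 0 < t <= T -> f x t = 0) -> f x 0 = 0.
Proof.
  intros Hc HT Hx Hzero.
  apply cond_eq; intros eps Heps.
  destruct (cont_rect_near_initial_time f T Hc eps Heps) as [d [Hd Hnear]].
  pose proof (Rmin_l d T); pose proof (Rmin_r d T).
  assert (0 < Rmin d T) by (apply Rmin_pos; lra).
  specialize (Hnear x (Rmin d T / 2) ltac:(split; lra) ltac:(lra)).
  rewrite Hzero in Hnear by lra.
  rewrite Rabs_minus_sym; assumption.
Qed.

(** * The reflection x -> 1 - x *)

Definition mirror (a b : R) (f : R -> R -> R) : R -> R -> R :=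
  fun x t => a * f (1 - x) t + b.

Lemma cont_rect_mirror a b f T : cont_rect f T -> cont_rect (mirror a b f) T.
Proof.
  intros Hc x t [Hx Ht] eps Heps.
  assert (Ha : 0 < Rabs a + 1) by (pose proof (Rabs_pos a); lra).
  destruct (Hc (1 - x) t ltac:(split; lra) (eps / (Rabs a + 1)))
    as [d [Hd Hcont]]; [apply Rdiv_lt_0_compat; lra|].
  exists d; split; [assumption|].
  intros y s [Hy Hs] Hyx Hst; unfold mirror.
  specialize (Hcont (1 - y) s ltac:(split; lra)
                ltac:(replace (1 - y - (1 - x)) with (- (y - x)) by ring;
                      rewrite Rabs_Ropp; assumption) Hst).
  replace (a * f (1 - y) s + b - (a * f (1 - x) t + b))
    with (a * (f (1 - y) s - f (1 - x) t)) by ring.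
  rewrite Rabs_mult.
  apply Rle_lt_trans with ((Rabs a + 1) * Rabs (f (1 - y) s - f (1 - x) t)).
  - apply Rmult_le_compat_r; [apply Rabs_pos | lra].
  - apply Rmult_lt_reg_l with (/ (Rabs a + 1)); [apply Rinv_0_lt_compat; lra|].
    rewrite <- Rmult_assoc, Rinv_l, Rmult_1_l by lra.
    rewrite Rmult_comm; exact Hcont.
Qed.

Lemma deriv_within_mirror f x t l a b :
  0 <= x <= 1 -> deriv_within (fun y => f y t) 0 1 (1 - x) l ->
  deriv_within (fun y => mirror a b f y t) 0 1 x (- a * l).
Proof.
  intros Hx Hd.
  eapply deriv_within_ext;
    [apply (deriv_within_affine_comb (fun y => f (1 - y) t) 0 1 x (- l) a 0 b),
       (deriv_within_reflect (fun y => f y t) x l Hd)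
    | assumption | intros y _; unfold mirror; ring | ring].
Qed.

Lemma C21_with_mirror f fx fxx ft T a b :
  C21_with f fx fxx ft T ->
  C21_with (mirror a b f) (mirror (- a) 0 fx) (mirror a 0 fxx) (mirror a 0 ft) T.
Proof.
  intros [Hfx [Hfxx [Hft [Cf [Cfx [Cfxx Cft]]]]]].
  assert (Hin : forall x t, in_rect T x t -> in_rect T (1 - x) t)
    by (intros x t [Hx Ht]; split; lra).
  repeat split; try apply cont_rect_mirror; try assumption;
    intros x t Hxt; pose proof (Hin x t Hxt) as Hxt'.
  - eapply deriv_within_ext;
      [exact (deriv_within_mirror f x t _ a b (proj1 Hxt) (Hfx _ _ Hxt'))
      | apply Hxt | reflexivity | unfold mirror; ring].
  - eapply deriv_within_ext;
      [exact (deriv_within_mirror fx x t _ (- a) 0 (proj1 Hxt) (Hfxx _ _ Hxt'))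
      | apply Hxt | reflexivity | unfold mirror; ring].
  - eapply deriv_within_ext;
      [exact (deriv_within_affine_comb (fun s => f (1 - x) s) 0 T t _ a 0 b
                (Hft _ _ Hxt'))
      | apply Hxt | intros s _; unfold mirror; ring | unfold mirror; ring].
Qed.

Lemma is_solution_mirror nu gamma rho0 u0 T v eta :
  is_solution nu gamma rho0 u0 T v eta ->
  is_solution nu gamma (fun x => rho0 (1 - x)) (fun x => - u0 (1 - x)) T
    (mirror (-1) 0 v) (mirror (-1) 1 eta).
Proof.
  intros [vx [vxx [vt [ex [exx [et [Hv [Heta [Hex [Heq [Het [Hinit Hbd]]]]]]]]]]]].
  do 6 eexists; split; [apply C21_with_mirror, Hv|].
  split; [apply C21_with_mirror, Heta|].
  unfold mirror; split.
  { intros x t Hx Ht; specialize (Hex (1 - x) t ltac:(lra) Ht); lra. }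
  split.
  { intros x t Hx Ht.
    destruct (Heq (1 - x) t ltac:(lra) Ht) as [P [Q [HP [HQ HPQ]]]].
    exists (- P), (- Q); split; [|split].
    - eapply derivable_pt_lim_ext;
        [|apply (derivable_pt_lim_reflect
                   (fun z => Rpower (rho0 z) gamma / Rpower (ex z t) gamma)), HP].
      intros y; simpl; do 2 f_equal; ring.
    - eapply derivable_pt_lim_ext;
        [|apply (derivable_pt_lim_reflect (fun z => vx z t / ex z t)), HQ].
      intros y; simpl; f_equal; ring.
    - lra. }
  split; [intros x t Hx Ht; rewrite Het by lra; ring|].
  split.
  { intros x Hx; destruct (Hinit (1 - x) ltac:(lra)) as [Hv0 Heta0].
    rewrite Hv0, Heta0; split; ring. }
  intros t Ht; destruct (Hbd t Ht) as [Hv0 [Hvx0 [Hv1 Hvx1]]].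
  rewrite Rminus_0_r, Rminus_diag, Hv0, Hvx0, Hv1, Hvx1; repeat split; ring.
Qed.

(** * Estimates for the pressure and viscous terms *)

Lemma Rpower_pos x y : 0 < Rpower x y.
Proof. apply exp_pos. Qed.

Lemma Rpower_minus_1 x y : 0 < x -> Rpower x (y - 1) = Rpower x y / x.
Proof.
  intros Hx.
  rewrite <- (Rpower_1 x Hx) at 3.
  unfold Rminus; rewrite Rpower_plus, Rpower_Ropp, Rpower_1 by exact Hx.
  reflexivity.
Qed.

(* With gamma > 1, K rho^gamma beats the linear term eps b rho once rho exceeds
   a / (2 b), and below that threshold eps a beats it. *)
Lemma Rpower_dominates_linear K a b gamma eps rho :
  0 < K -> 0 < a -> 0 < b -> 1 < gamma -> 0 < eps ->
  eps * b <= K * Rpower (a / (2 * b)) (gamma - 1) -> 0 < rho ->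
  eps * b * rho < K * Rpower rho gamma + eps * a.
Proof.
  intros HK Ha Hb Hg Heps Hsmall Hrho.
  pose proof (Rpower_pos rho gamma) as Hpow.
  destruct (Rle_lt_dec rho (a / (2 * b))) as [Hle|Hgt].
  - assert (b * rho <= a / 2).
    { apply Rmult_le_compat_l with (r := b) in Hle; [|lra].
      replace (b * (a / (2 * b))) with (a / 2) in Hle by (field; lra). exact Hle. }
    assert (0 < K * Rpower rho gamma) by (apply Rmult_lt_0_compat; assumption).
    nra.
  - assert (Hlt : Rpower (a / (2 * b)) (gamma - 1) < Rpower rho (gamma - 1)).
    { apply Rlt_Rpower_l; [lra|split; [apply Rdiv_lt_0_compat; lra | exact Hgt]]. }
    replace (Rpower rho gamma) with (rho * Rpower rho (gamma - 1))
      by (rewrite Rpower_minus_1 by exact Hrho; field; lra).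
    assert (0 < eps * a) by (apply Rmult_lt_0_compat; assumption).
    apply Rmult_lt_compat_l with (r := K) in Hlt; [|assumption].
    nra.
Qed.

Lemma viscous_quotient_le eps E vxx vx exx :
  0 < eps -> 1 / 2 < E < 3 / 2 -> vxx <= - 2 * eps -> - exx * vx <= 3 / 4 * eps ->
  (vxx * E - exx * vx) / E² <= - eps.
Proof.
  intros Heps HE Hvxx Hcross.
  assert (HE2 : 0 < E²) by (unfold Rsqr; nra).
  assert (Hnum : vxx * E - exx * vx <= - eps * E²).
  { unfold Rsqr.
    assert (0 < eps * ((E - 1 / 2) * (3 / 2 - E))) by (apply Rmult_lt_0_compat; nra).
    nra. }
  apply Rmult_le_reg_r with (E²); [exact HE2|].
  unfold Rdiv; rewrite Rmult_assoc, Rinv_l by lra; lra.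
Qed.

(* The quotient below is what the quotient and chain rules give for the
   derivative of rho^gamma / E^gamma; it equals
   gamma (rho/E)^gamma (rho'/rho - E'/E). *)
Lemma pressure_quotient_ge gamma lam rho E d exx :
  0 < gamma -> 0 < lam -> 0 < rho -> 1 / 2 < E < 3 / 2 ->
  d / rho >= lam -> exx < lam / 4 ->
  gamma * lam / (2 * Rpower 2 gamma) * Rpower rho gamma <=
  (gamma * Rpower rho (gamma - 1) * d * Rpower E gamma
     - gamma * Rpower E (gamma - 1) * exx * Rpower rho gamma) / (Rpower E gamma)².
Proof.
  intros Hg Hlam Hrho HE Hd Hexx.
  pose proof (Rpower_pos rho gamma) as HA.
  pose proof (Rpower_pos E gamma) as HB.
  pose proof (Rpower_pos 2 gamma) as H2.
  assert (HB2 : Rpower E gamma <= Rpower 2 gamma)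
    by (apply Rle_Rpower_l; lra).
  assert (Hlog : lam / 2 <= d / rho - exx / E).
  { destruct (Rle_lt_dec 0 exx).
    - assert (exx / E <= 2 * exx).
      { apply Rmult_le_reg_r with E; [lra|].
        unfold Rdiv; rewrite Rmult_assoc, Rinv_l by lra; nra. }
      lra.
    - assert (exx / E < 0) by (apply Rdiv_neg_pos; lra). lra. }
  rewrite !Rpower_minus_1 by lra.
  replace ((gamma * (Rpower rho gamma / rho) * d * Rpower E gamma
              - gamma * (Rpower E gamma / E) * exx * Rpower rho gamma)
             / (Rpower E gamma)²)
    with (gamma * Rpower rho gamma / Rpower E gamma * (d / rho - exx / E))
    by (unfold Rsqr; field; lra).
  assert (Hratio : Rpower rho gamma / Rpower 2 gamma <= Rpower rho gamma / Rpower E gamma).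
  { apply Rmult_le_compat_l; [lra|]. apply Rinv_le_contravar; assumption. }
  replace (gamma * lam / (2 * Rpower 2 gamma) * Rpower rho gamma)
    with (gamma * (Rpower rho gamma / Rpower 2 gamma) * (lam / 2)) by (field; lra).
  replace (gamma * Rpower rho gamma / Rpower E gamma * (d / rho - exx / E))
    with (gamma * (Rpower rho gamma / Rpower E gamma) * (d / rho - exx / E)) by (field; lra).
  assert (0 < Rpower rho gamma / Rpower 2 gamma) by (apply Rdiv_lt_0_compat; assumption).
  apply Rmult_le_compat; try nra.
Qed.

(** * The comparison argument *)

Section Blowup.

Variables (nu gamma lam L T : R) (rho0 u0 : R -> R).
Variables (v eta vx vxx vt ex exx et : R -> R -> R).

Hypothesis Hnu : 0 < nu.
Hypothesis Hgamma : 1 < gamma.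
Hypothesis Hlam : 0 < lam.
Hypothesis HL : 0 < L < 1.
Hypothesis HT : 0 < T.
Hypothesis Hrho_pos : forall x, 0 < x < 1 -> 0 < rho0 x.
Hypothesis Hrho_log : forall x, 0 < x < L ->
  exists d, derivable_pt_lim rho0 x d /\ d / rho0 x >= lam.
Hypothesis Hu0L : u0 L < 0.
Hypothesis Hu0 : forall x, 0 < x < L -> u0 x <= 0.
Hypothesis Hv : C21_with v vx vxx vt T.
Hypothesis Heta : C21_with eta ex exx et T.
Hypothesis Heq : forall x t, 0 < x < 1 -> 0 < t <= T ->
  exists P Q,
    derivable_pt_lim (fun y => Rpower (rho0 y) gamma / Rpower (ex y t) gamma) x P /\
    derivable_pt_lim (fun y => vx y t / ex y t) x Q /\
    rho0 x * vt x t + P = nu * Q.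
Hypothesis Hinit : forall x, 0 < x < 1 -> v x 0 = u0 x /\ eta x 0 = x.
Hypothesis Hbd : forall t, 0 < t <= T ->
  v 0 t = 0 /\ vx 0 t = 0 /\ v 1 t = 0 /\ vx 1 t = 0.

Lemma ex_initial x : 0 < x < 1 -> ex x 0 = 1.
Proof.
  intros Hx.
  apply (deriv_within_affine_slope (fun y => eta y 0) 0 1 x _ 1 0); [|assumption|].
  - apply (proj1 Heta); split; lra.
  - intros y Hy; rewrite (proj2 (Hinit y Hy)); ring.
Qed.

Lemma exx_initial x : 0 < x < 1 -> exx x 0 = 0.
Proof.
  intros Hx.
  apply (deriv_within_affine_slope (fun y => ex y 0) 0 1 x _ 0 1); [|assumption|].
  - apply (proj1 (proj2 Heta)); split; lra.
  - intros y Hy; rewrite ex_initial by assumption; ring.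
Qed.

Lemma v_left_boundary t : 0 <= t <= T -> v 0 t = 0.
Proof.
  intros Ht; destruct (Req_dec t 0) as [->|Ht0]; [|apply Hbd; lra].
  destruct Hv as [_ [_ [_ [Cv _]]]].
  apply (cont_rect_initial_zero v T 0 Cv HT ltac:(lra)).
  intros s Hs; apply Hbd, Hs.
Qed.

Let om := Rmin (lam / 4) (1 / (4 * L)).

Lemma short_time_bounds : exists t0, 0 < t0 < T /\
  (forall x t, 0 < x < 1 -> 0 <= t <= t0 -> 1 / 2 < ex x t < 3 / 2 /\ Rabs (exx x t) < om) /\
  (forall t, 0 <= t <= t0 -> v L t <= u0 L / 2).
Proof.
  destruct Hv as [_ [_ [_ [Cv _]]]].
  destruct Heta as [_ [_ [_ [_ [Cex [Cexx _]]]]]].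
  assert (Hom : 0 < om) by (apply Rmin_pos; [lra | apply Rdiv_lt_0_compat; lra]).
  destruct (cont_rect_near_initial_time ex T Cex (1 / 2) ltac:(lra)) as [d1 [Hd1 Hex]].
  destruct (cont_rect_near_initial_time exx T Cexx om Hom) as [d2 [Hd2 Hexx]].
  destruct (cont_rect_near_initial_time v T Cv (- u0 L / 2) ltac:(lra)) as [d3 [Hd3 HvL]].
  pose proof (Rmin_l (Rmin d1 d2) (Rmin d3 T)); pose proof (Rmin_r (Rmin d1 d2) (Rmin d3 T)).
  pose proof (Rmin_l d1 d2); pose proof (Rmin_r d1 d2);
    pose proof (Rmin_l d3 T); pose proof (Rmin_r d3 T).
  assert (0 < Rmin (Rmin d1 d2) (Rmin d3 T)) by (repeat apply Rmin_pos; lra).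
  exists (Rmin (Rmin d1 d2) (Rmin d3 T) / 2); split; [lra|split].
  - intros x t Hx Ht; split.
    + specialize (Hex x t ltac:(split; lra) ltac:(lra)).
      rewrite ex_initial in Hex by assumption.
      apply Rabs_def2 in Hex; lra.
    + specialize (Hexx x t ltac:(split; lra) ltac:(lra)).
      rewrite exx_initial, Rminus_0_r in Hexx by assumption; exact Hexx.
  - intros t Ht.
    specialize (HvL L t ltac:(split; lra) ltac:(lra)).
    rewrite (proj1 (Hinit L HL)) in HvL.
    apply Rabs_def2 in HvL; lra.
Qed.

Section Comparison.

Variables t0 eps : R.

Hypothesis Ht0 : 0 < t0 < T.
Hypothesis Hex_bd : forall x t, 0 < x < 1 -> 0 <= t <= t0 ->
  1 / 2 < ex x t < 3 / 2 /\ Rabs (exx x t) < om.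
Hypothesis HvL : forall t, 0 <= t <= t0 -> v L t <= u0 L / 2.

Let c := 2 * L / t0.
Let K := gamma * lam / (2 * Rpower 2 gamma).

Hypothesis Heps : 0 < eps.
Hypothesis Heps_pressure : eps * (c * L) <= K * Rpower (nu / (2 * (c * L))) (gamma - 1).
Hypothesis Heps_boundary : eps * (4 * (L * L)) <= - u0 L.

(* The perturbation is nonpositive on [0,L] x {0}, vanishes on {0} x [0,t0],
   and its t-dependent term gives it slope L eps at (0, t0). *)
Let z x t := v x t + eps * (x * x - L * x + c * t * x).

Lemma c_pos : 0 < c.
Proof. unfold c; apply Rdiv_lt_0_compat; lra. Qed.

Lemma c_t0 : c * t0 = 2 * L.
Proof. unfold c; field; lra. Qed.

Lemma z_cont : cont_rect z T.
Proof.
  apply cont_rect_plus; [apply Hv|].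
  apply cont_rect_of_continuity_2d; intros x t.
  apply continuity_2d_pt_mult; [apply continuity_2d_pt_const|].
  repeat apply continuity_2d_pt_plus || apply continuity_2d_pt_minus
    || apply continuity_2d_pt_mult || apply continuity_2d_pt_opp;
    apply continuity_2d_pt_id1 || apply continuity_2d_pt_id2 || apply continuity_2d_pt_const.
Qed.

Lemma z_partial_x t y : 0 <= t <= T -> 0 < y < 1 ->
  derivable_pt_lim (fun x => z x t) y (vx y t + eps * (2 * y - L + c * t)).
Proof.
  intros Ht Hy.
  replace (vx y t + eps * (2 * y - L + c * t))
    with (vx y t + (2 * eps * y + eps * (c * t - L))) by ring.
  apply derivable_pt_lim_ext with
    (f := fun x => v x t + (eps * (x * x) + eps * (c * t - L) * x + 0));
    [intros x; unfold z; ring|].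
  apply (derivable_pt_lim_plus (fun x => v x t)); [|apply derivable_pt_lim_quadratic].
  apply (deriv_within_interior _ 0 1); [apply (proj1 Hv); split; lra | exact Hy].
Qed.

Lemma z_partial_xx t y : 0 <= t <= T -> 0 < y < 1 ->
  derivable_pt_lim (fun x => vx x t + eps * (2 * x - L + c * t)) y (vxx y t + 2 * eps).
Proof.
  intros Ht Hy.
  replace (vxx y t + 2 * eps) with (vxx y t + (2 * 0 * y + 2 * eps)) by ring.
  apply derivable_pt_lim_ext with
    (f := fun x => vx x t + (0 * (x * x) + 2 * eps * x + eps * (c * t - L)));
    [intros x; ring|].
  apply (derivable_pt_lim_plus (fun x => vx x t)); [|apply derivable_pt_lim_quadratic].
  apply (deriv_within_interior _ 0 1); [apply (proj1 (proj2 Hv)); split; lra | exact Hy].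
Qed.

Lemma z_partial_t x s : 0 <= x <= 1 -> 0 <= s <= T ->
  deriv_within (fun t => z x t) 0 T s (vt x s + eps * c * x).
Proof.
  intros Hx Hs.
  eapply deriv_within_ext;
    [exact (deriv_within_affine_comb (fun t => v x t) 0 T s _ 1 (eps * c * x)
              (eps * (x * x - L * x)) (proj1 (proj2 (proj2 Hv)) x s (conj Hx Hs)))
    | exact Hs | intros t _; unfold z; ring | ring].
Qed.

Lemma z_max_derivatives xs ts : 0 < xs < L -> 0 < ts <= t0 ->
  (forall x t, 0 <= x <= L -> 0 <= t <= t0 -> z x t <= z xs ts) ->
  vx xs ts = - eps * (2 * xs - L + c * ts) /\ vxx xs ts <= - 2 * eps /\
  - (eps * c * xs) <= vt xs ts.
Proof.
  intros Hxs Hts Hmax.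
  assert (Hmax_x : forall y, 0 < y < L -> z y ts <= z xs ts) by (intros; apply Hmax; lra).
  split; [|split].
  - assert (vx xs ts + eps * (2 * xs - L + c * ts) = 0); [|lra].
    apply (derivative_zero_at_interior_max (fun x => z x ts) 0 L xs); try assumption.
    apply z_partial_x; lra.
  - assert (vxx xs ts + 2 * eps <= 0); [|lra].
    apply (second_derivative_nonpos_at_interior_max (fun x => z x ts)
             (fun x => vx x ts + eps * (2 * x - L + c * ts)) 0 L xs); try assumption.
    + intros y Hy; apply z_partial_x; lra.
    + apply z_partial_xx; lra.
  - assert (0 <= vt xs ts + eps * c * xs); [|lra].
    apply (time_derivative_nonneg_at_max (fun t => z xs t) T ts); [apply z_partial_t; lra | lra |].
    intros s Hs; apply Hmax; lra.
Qed.

Lemma viscous_term_le xs ts Q : 0 < xs < L -> 0 < ts <= t0 ->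
  (forall x t, 0 <= x <= L -> 0 <= t <= t0 -> z x t <= z xs ts) ->
  derivable_pt_lim (fun y => vx y ts / ex y ts) xs Q -> Q <= - eps.
Proof.
  intros Hxs Hts Hmax HQ.
  destruct (z_max_derivatives xs ts Hxs Hts Hmax) as [Hvx [Hvxx _]].
  destruct (Hex_bd xs ts ltac:(lra) ltac:(lra)) as [HE Hexx].
  rewrite (uniqueness_limite _ xs Q _ HQ
    (derivable_pt_lim_div (fun y => vx y ts) (fun y => ex y ts) xs _ _
       (deriv_within_interior _ 0 1 xs _ (proj1 (proj2 Hv) xs ts ltac:(split; lra)) ltac:(lra))
       (deriv_within_interior _ 0 1 xs _ (proj1 (proj2 Heta) xs ts ltac:(split; lra)) ltac:(lra))
       ltac:(lra))).
  apply viscous_quotient_le; try lra.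
  assert (Hw : Rabs (2 * xs - L + c * ts) <= 3 * L).
  { pose proof c_pos; pose proof c_t0.
    assert (c * ts <= c * t0) by (apply Rmult_le_compat_l; lra).
    apply Rabs_le; nra. }
  assert (Hom : Rabs (exx xs ts) * (3 * L) <= 3 / 4).
  { assert (om <= 1 / (4 * L)) by apply Rmin_r.
    apply Rle_trans with (1 / (4 * L) * (3 * L)); [apply Rmult_le_compat_r; lra|].
    right; field; lra. }
  rewrite Hvx.
  replace (- exx xs ts * (- eps * (2 * xs - L + c * ts)))
    with (eps * (exx xs ts * (2 * xs - L + c * ts))) by ring.
  rewrite (Rmult_comm (3 / 4) eps).
  apply Rmult_le_compat_l; [lra|].
  apply Rle_trans with (Rabs (exx xs ts * (2 * xs - L + c * ts))); [apply Rle_abs|].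
  rewrite Rabs_mult.
  apply Rle_trans with (Rabs (exx xs ts) * (3 * L)); [|exact Hom].
  apply Rmult_le_compat_l; [apply Rabs_pos | exact Hw].
Qed.

Lemma pressure_term_ge xs ts P : 0 < xs < L -> 0 <= ts <= t0 ->
  derivable_pt_lim (fun y => Rpower (rho0 y) gamma / Rpower (ex y ts) gamma) xs P ->
  K * Rpower (rho0 xs) gamma <= P.
Proof.
  intros Hxs Hts HP.
  destruct (Hex_bd xs ts ltac:(lra) ltac:(lra)) as [HE Hexx].
  destruct (Hrho_log xs Hxs) as [d [Hd Hdlam]].
  assert (Hrho : 0 < rho0 xs) by (apply Hrho_pos; lra).
  assert (Hexx_lt : exx xs ts < lam / 4).
  { assert (om <= lam / 4) by apply Rmin_l. apply Rabs_def2 in Hexx; lra. }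
  assert (HE0 : 0 < ex xs ts) by lra.
  assert (HP' := derivable_pt_lim_div
    (fun y => Rpower (rho0 y) gamma) (fun y => Rpower (ex y ts) gamma) xs _ _
    (derivable_pt_lim_comp rho0 (fun r => Rpower r gamma) xs _ _ Hd
       (derivable_pt_lim_power _ gamma Hrho))
    (derivable_pt_lim_comp (fun y => ex y ts) (fun r => Rpower r gamma) xs _ _
       (deriv_within_interior _ 0 1 xs _ (proj1 (proj2 Heta) xs ts ltac:(split; lra)) ltac:(lra))
       (derivable_pt_lim_power _ gamma HE0))
    (Rgt_not_eq _ _ (Rpower_pos (ex xs ts) gamma))).
  rewrite (uniqueness_limite _ xs P _ HP HP'); simpl.
  unfold K; apply pressure_quotient_ge; lra.
Qed.

(* At an interior maximum the equation balances a pressure term of size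
   rho^gamma against viscous and transport terms of size eps and eps rho. *)
Lemma z_no_interior_max xs ts : 0 < xs < L -> 0 < ts <= t0 ->
  ~ (forall x t, 0 <= x <= L -> 0 <= t <= t0 -> z x t <= z xs ts).
Proof.
  intros Hxs Hts Hmax.
  destruct (Heq xs ts ltac:(lra) ltac:(lra)) as [P [Q [HP [HQ Hbalance]]]].
  pose proof (viscous_term_le xs ts Q Hxs Hts Hmax HQ) as HQle.
  pose proof (pressure_term_ge xs ts P Hxs ltac:(lra) HP) as HPge.
  destruct (z_max_derivatives xs ts Hxs Hts Hmax) as [_ [_ Hvt]].
  assert (Hrho : 0 < rho0 xs) by (apply Hrho_pos; lra).
  assert (HK : 0 < K).
  { unfold K; pose proof (Rpower_pos 2 gamma).
    apply Rdiv_lt_0_compat; [apply Rmult_lt_0_compat|]; lra. }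
  assert (HcL : 0 < c * L) by (pose proof c_pos; apply Rmult_lt_0_compat; lra).
  assert (Htransport : - (eps * (c * L) * rho0 xs) <= rho0 xs * vt xs ts).
  { assert (eps * c * xs <= eps * (c * L)).
    { rewrite Rmult_assoc; apply Rmult_le_compat_l; [lra|].
      apply Rmult_le_compat_l; [pose proof c_pos|]; lra. }
    nra. }
  pose proof (Rpower_dominates_linear K nu (c * L) gamma eps (rho0 xs)
                HK Hnu HcL Hgamma Heps Heps_pressure Hrho).
  nra.
Qed.

Lemma z_nonpos x t : 0 <= x <= L -> 0 <= t <= t0 -> z x t <= 0.
Proof.
  destruct (cont_rect_attains_max z T L t0 z_cont ltac:(lra) ltac:(lra))
    as [xs [ts [Hxs [Hts Hmax]]]].
  intros Hx Ht; apply Rle_trans with (z xs ts); [apply Hmax; assumption|].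
  pose proof c_pos; pose proof c_t0.
  unfold z.
  destruct (Req_dec xs 0) as [->|Hxs0].
  { rewrite v_left_boundary by lra; lra. }
  destruct (Req_dec xs L) as [->|HxsL].
  { pose proof (HvL ts Hts).
    assert (c * ts <= c * t0) by (apply Rmult_le_compat_l; lra).
    assert (eps * (c * ts * L) <= eps * (2 * (L * L))) by (apply Rmult_le_compat_l; nra).
    nra. }
  destruct (Req_dec ts 0) as [->|Hts0].
  { rewrite (proj1 (Hinit xs ltac:(lra))).
    pose proof (Hu0 xs ltac:(lra)).
    assert (eps * (xs * (xs - L)) <= 0) by (apply Rmult_le_0_l; nra).
    nra. }
  exfalso; apply (z_no_interior_max xs ts); [lra | lra | assumption].
Qed.

(* v(., t0) = o(x) at x = 0, while the perturbation has slope L eps there. *)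
Lemma comparison_absurd : False.
Proof.
  destruct (Hbd t0 ltac:(lra)) as [Hv0 [Hvx0 _]].
  assert (Hslope := proj1 Hv 0 t0 ltac:(split; lra)); rewrite Hvx0 in Hslope.
  assert (HeL : 0 < eps * L) by (apply Rmult_lt_0_compat; lra).
  destruct (deriv_within_zero_at_left_end (fun y => v y t0) 1 (eps * L) L
              ltac:(lra) Hslope Hv0 HeL) as [y [Hy Hvy]].
  pose proof (z_nonpos y t0 ltac:(lra) ltac:(lra)) as Hz.
  unfold z in Hz; simpl in Hvy.
  replace (c * t0 * y) with (2 * L * y) in Hz by (rewrite c_t0; ring).
  assert (0 < eps * (y * y)) by (apply Rmult_lt_0_compat; nra).
  nra.
Qed.

End Comparison.

Lemma blowup_absurd : False.
Proof.
  destruct short_time_bounds as [t0 [Ht0 [Hex_bd HvL]]].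
  set (cL := 2 * L / t0 * L).
  set (bound := gamma * lam / (2 * Rpower 2 gamma) * Rpower (nu / (2 * cL)) (gamma - 1)).
  assert (HcL : 0 < cL)
    by (unfold cL; apply Rmult_lt_0_compat; [apply Rdiv_lt_0_compat|]; lra).
  assert (Hbound : 0 < bound).
  { pose proof (Rpower_pos 2 gamma); pose proof (Rpower_pos (nu / (2 * cL)) (gamma - 1)).
    unfold bound; apply Rmult_lt_0_compat; [|assumption].
    apply Rdiv_lt_0_compat; [apply Rmult_lt_0_compat|]; lra. }
  assert (HL2 : 0 < 4 * (L * L)) by nra.
  pose proof (Rmin_l (bound / cL) (- u0 L / (4 * (L * L)))).
  pose proof (Rmin_r (bound / cL) (- u0 L / (4 * (L * L)))).
  apply (comparison_absurd t0 (Rmin (bound / cL) (- u0 L / (4 * (L * L)))));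
    try assumption.
  - apply Rmin_pos; apply Rdiv_lt_0_compat; lra.
  - fold cL bound.
    apply Rle_trans with (bound / cL * cL); [apply Rmult_le_compat_r; lra|].
    right; field; lra.
  - apply Rle_trans with (- u0 L / (4 * (L * L)) * (4 * (L * L)));
      [apply Rmult_le_compat_r; lra|].
    right; field; lra.
Qed.

End Blowup.

Lemma no_solution_left nu gamma rho0 u0 lam L T :
  0 < nu -> 1 < gamma -> 0 < lam -> 0 < L < 1 -> 0 < T ->
  (forall x, 0 < x < 1 -> 0 < rho0 x) ->
  (forall x, 0 < x < L -> exists d, derivable_pt_lim rho0 x d /\ d / rho0 x >= lam) ->
  u0 L < 0 -> (forall x, 0 < x < L -> u0 x <= 0) ->
  ~ exists v eta, is_solution nu gamma rho0 u0 T v eta.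
Proof.
  intros Hnu Hgamma Hlam HL HT Hrho_pos Hrho_log Hu0L Hu0
    [v [eta [vx [vxx [vt [ex [exx [et [Hv [Heta [_ [Heq [_ [Hinit Hbd]]]]]]]]]]]]]].
  exact (blowup_absurd nu gamma lam L T rho0 u0 v eta vx vxx vt ex exx et
           Hnu Hgamma Hlam HL HT Hrho_pos Hrho_log Hu0L Hu0 Hv Heta Heq Hinit Hbd).
Qed.

Theorem theorem2p2 (nu gamma : R) (rho0 u0 : R -> R)
  (Hnu : 0 < nu) (Hgamma : 1 < gamma)
  (Hrho_cont : cont_on_interval rho0 0 1)
  (Hrho_pos : forall x, 0 < x < 1 -> 0 < rho0 x)
  (Hrho_bd : rho0 0 = 0 /\ rho0 1 = 0)
  (Hu0_cont : cont_on_interval u0 0 1)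
  (Hlam : exists l1 l2 l3 l4 : R,
     0 < l1 /\ 0 < l2 /\ 0 < l3 < 1 /\ 0 < l4 < 1 /\
     ( ( (forall x, 0 < x < l3 ->
            exists d, derivable_pt_lim rho0 x d /\ d / rho0 x >= l1) /\
         u0 l3 < 0 /\ (forall x, 0 < x < l3 -> u0 x <= 0) )
     \/
       ( (forall x, l4 < x < 1 ->
            exists d, derivable_pt_lim rho0 x d /\ d / rho0 x <= - l2) /\
         u0 l4 > 0 /\ (forall x, l4 < x < 1 -> u0 x >= 0) ) )) :
  forall T : R, 0 < T ->
    ~ exists v eta : R -> R -> R, is_solution nu gamma rho0 u0 T v eta.
Proof.
  intros T HT.
  destruct Hlam as [l1 [l2 [l3 [l4 [Hl1 [Hl2 [Hl3 [Hl4 [[Hrho Hu] | [Hrho Hu]]]]]]]]]].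
  - apply (no_solution_left nu gamma rho0 u0 l1 l3 T); tauto.
  - intros [v [eta Hsol]].
    apply (no_solution_left nu gamma (fun x => rho0 (1 - x)) (fun x => - u0 (1 - x))
             l2 (1 - l4) T); try lra.
    + intros x Hx; apply Hrho_pos; lra.
    + intros x Hx; destruct (Hrho (1 - x) ltac:(lra)) as [d [Hd Hlog]].
      exists (- d); split; [exact (derivable_pt_lim_reflect rho0 x d Hd)|].
      assert (0 < rho0 (1 - x)) by (apply Hrho_pos; lra).
      replace (- d / rho0 (1 - x)) with (- (d / rho0 (1 - x))) by (field; lra).
      lra.
    + replace (1 - (1 - l4)) with l4 by ring; lra.
    + intros x Hx; pose proof (proj2 Hu (1 - x) ltac:(lra)); lra.
    + exists (mirror (-1) 0 v), (mirror (-1) 1 eta); apply is_solution_mirror, Hsol.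
Qed.
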